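(* Let $\sigma$ be a (nonempty) input sequence of List Update with Time Windows and let $\sigma'$ be the sequence obtained from $\sigma$ by omitting all requests that are not triggering requests with respect to ALG run on $\sigma$. Then $$\frac{ALG(\sigma)}{OPT(\sigma)}\le\frac{ALG(\sigma')}{OPT(\sigma')}.$$
   Context: List Update with Time Windows. A set $\mathbb{E}$ of $n$ elements is kept in an ordered list (position $1$ is the head). An input $\sigma$ is a sequence of requests $r_1,\dots,r_m$; request $r_k$ specifies an element $e_k\in\mathbb{E}$, an arrival time $a_k$ and a deadline $q_k\ge a_k$. At any time an algorithm may (a) perform an access up to position $i$, at cost $i$, which serves every pending request (arrived and not yet served) whose element currently lies in positions $1,\dots,i$; (b) swap two adjacent elements at cost $1$. Actions are instantaneous. Every request must be served at some time in $[a_k,q_k]$. Cost = total access cost + number of swaps. $OPT(\sigma)$ is the minimum cost of an offline feasible solution from the same initial list. Algorithm ALG: whenever the current time equals the deadline of at least one pending request, let the triggering element be the element at the largest current position among those elements having a pending request whose deadline is the current time, and let $i$ be its position. ALG accesses the first $\min(2i-1,n)$ positions and then moves the triggering element to the front by $i-1$ adjacent swaps. At each such event, the triggering request is one (arbitrarily fixed) pending request for the triggering element whose deadline is the current time. A request of $\sigma$ is a triggering request (with respect to ALG) if it is the triggering request of some event of ALG on $\sigma$. *)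

From HB Require Import structures.
From Stdlib Require Import ClassicalEpsilon.
From mathcomp Require Import all_boot all_order all_algebra.
Set Implicit Arguments. Unset Strict Implicit. Unset Printing Implicit Defensive.
Import Order.TTheory GRing.Theory Num.Theory.
Local Open Scope ring_scope.

Section LUTW.
Variables (E : finType) (R : realDomainType).

(* A request: element, arrival time, deadline. *)
Record req := Req { relem : E; rarr : R; rdl : R }.

Definition req2t (r : req) : E * R * R := (relem r, rarr r, rdl r).
Definition t2req (x : E * R * R) : req := Req x.1.1 x.1.2 x.2.
Lemma req2tK : cancel req2t t2req. Proof. by case. Qed.
HB.instance Definition _ := Equality.copy req (can_type req2tK).

Definition indexed (s : seq req) : seq (nat * req) := zip (iota 0 (size s)) s.

(* Lists are sequences of elements; the item at 0-based index j is at  *)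
(* position j+1.                                                       *)
Inductive action := Acc of nat  (* access up to position i, cost i *)
                  | Swp of nat. (* swap items at positions j+1, j+2, cost 1 *)

Definition swap_at (j : nat) (L : seq E) : seq E :=
  take j L ++ rev (take 2 (drop j L)) ++ drop j.+2 L.

Definition apply_act (L : seq E) (a : action) : seq E :=
  match a with Acc _ => L | Swp j => swap_at j L end.

Definition act_cost (a : action) : nat :=
  match a with Acc i => i | Swp _ => 1 end%N.

Definition act_valid (n : nat) (a : action) : bool :=
  match a with Acc i => (0 < i <= n)%N | Swp j => (j.+2 <= n)%N end.

(* A schedule: a sequence of timed actions, performed in this order. *)
Definition schedule := seq (R * action).

Definition sched_cost (S : schedule) : nat := (\sum_(x <- S) act_cost x.2)%N.

Definition list_before (L0 : seq E) (S : schedule) (p : nat) : seq E :=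
  foldl apply_act L0 (take p (map snd S)).

Definition covers (L0 : seq E) (S : schedule) (r : req) (p : nat) : bool :=
  match nth (0, Acc 0%N) S p with
  | (t, Acc i) => (rarr r <= t) && (index (relem r) (list_before L0 S p) < i)%N
  | _ => false
  end.

(* r is served by the first action covering it (afterwards it is no longer
   pending); it must exist and happen no later than the deadline. *)
Definition served_in_time (L0 : seq E) (S : schedule) (r : req) : bool :=
  let p := find (covers L0 S r) (iota 0 (size S)) in
  (p < size S)%N && ((nth (0, Acc 0%N) S p).1 <= rdl r).

Definition feasible (L0 : seq E) (s : seq req) (S : schedule) : bool :=
  [&& sorted <=%R (map fst S),
      all (act_valid (size L0)) (map snd S)
    & all (served_in_time L0 S) s].

Record alg_state := AlgState {
  alist : seq E;
  aserved : seq nat;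
  acost : nat;
  aevents : seq (seq nat)    (* for each event, the indices of the pending
                                requests for the triggering element whose
                                deadline is the current time *)
}.

Definition alg_step (s : seq req) (st : alg_state) (t : R) : alg_state :=
  let L := alist st in
  let pend (p : nat * req) := (p.1 \notin aserved st) && (rarr p.2 <= t) in
  let due (p : nat * req) := pend p && (rdl p.2 == t) in
  if has due (indexed s) then
    (* 0-based index of the triggering element (position i = i0 + 1) *)
    let i0 := (\max_(p <- indexed s | due p) index (relem p.2) L)%N in
    let m := minn (2 * i0).+1 (size L) in   (* min(2i-1, n) *)
    let newly := [seq p.1 | p <- indexed s & pend p && (index (relem p.2) L < m)%N] in
    let cand := [seq p.1 | p <- indexed s & due p && (index (relem p.2) L == i0)] in
    AlgState (drop i0 (take i0.+1 L) ++ take i0 L ++ drop i0.+1 L)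
             (aserved st ++ newly) (acost st + m + i0)%N (rcons (aevents st) cand)
  else st.

(* ALG acts only at deadlines; these are processed in increasing order. *)
Definition deadlines (s : seq req) : seq R := sort <=%R (undup (map rdl s)).

Definition alg_run (L0 : seq E) (s : seq req) : alg_state :=
  foldl (alg_step s) (AlgState L0 [::] 0%N [::]) (deadlines s).

Definition ALG (L0 : seq E) (s : seq req) : nat := acost (alg_run L0 s).

(* trig is a valid choice of the triggering requests: one (arbitrary)
   candidate per event of ALG, listed in event order. *)
Definition triggering_choice (L0 : seq E) (s : seq req) (trig : seq nat) : bool :=
  all2 (fun k C => k \in C) trig (aevents (alg_run L0 s)).

Definition restrict (s : seq req) (trig : seq nat) : seq req :=
  [seq p.2 | p <- indexed s & p.1 \in trig].

Definition full_sched (L0 : seq E) (s : seq req) : schedule :=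
  [seq (t, Acc (size L0)) | t <- sort <=%R (map rdl s)].

Lemma foldl_acc (L : seq E) (xs : seq R) (m : nat) :
  foldl apply_act L [seq Acc m | _ <- xs] = L.
Proof. by elim: xs. Qed.

Lemma exists_feasible (L0 : seq E) (s : seq req) :
  perm_eq L0 (enum E) -> all (fun r => rarr r <= rdl r) s ->
  exists c, exists S, feasible L0 s S /\ sched_cost S = c.
Proof.
move=> hperm harr.
set l := sort <=%R (map rdl s).
have inL0 : forall e, e \in L0 by move=> e; rewrite (perm_mem hperm) mem_enum.
set S := [seq (t, Acc (size L0)) | t <- l].
exists (sched_cost S), S; split => //.
have fstS : map fst S = l by rewrite -map_comp map_id.
have sndS : map snd S = [seq Acc (size L0) | _ <- l] by rewrite -map_comp.
have szS : size S = size l by rewrite size_map.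
have nthS : forall p, (p < size l)%N -> nth (0, Acc 0%N) S p = (nth 0 l p, Acc (size L0)).
  by move=> p hp; rewrite (nth_map 0).
have lbS : forall p, list_before L0 S p = L0.
  by move=> p; rewrite /list_before sndS -map_take foldl_acc.
have lsort : sorted <=%R l by apply: sort_sorted; exact: le_total.
apply/and3P; split; first by rewrite fstS.
- rewrite sndS all_map; apply/allP => t tl /=.
  have : t \in map rdl s by rewrite -(mem_sort <=%R).
  case: (s) => // r _ _.
  by rewrite leqnn andbT (leq_ltn_trans (leq0n (index (relem r) L0))) // index_mem.
apply/allP => r rs.
have rl : rdl r \in l by rewrite mem_sort; apply: map_f.
set q := index (rdl r) l.
have ql : (q < size l)%N by rewrite index_mem.
have cq : covers L0 S r q.
  rewrite /covers nthS // nth_index // lbS (allP harr r rs) /=.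
  by rewrite index_mem.
set N := size S.
have hasc : has (covers L0 S r) (iota 0 N).
  by apply/hasP; exists q => //; rewrite mem_iota add0n /N szS.
set p := find (covers L0 S r) (iota 0 N).
have pq : (p <= q)%N.
  rewrite leqNgt; apply/negP => qp.
  have := before_find 0%N qp; rewrite nth_iota ?cq //.
  by rewrite /N szS (leq_trans ql).
have pl : (p < size l)%N by exact: leq_ltn_trans pq ql.
rewrite /served_in_time -/N -/p /N szS pl nthS //=.
have -> : rdl r = nth 0 l q by rewrite nth_index.
by apply: (sorted_leq_nth le_trans le_refl) => //; rewrite inE.
Qed.

Definition opt_pred (L0 : seq E) (s : seq req) : pred nat := fun c =>
  if excluded_middle_informative
       (exists S, feasible L0 s S /\ sched_cost S = c) then true else false.

(* OPT = least cost of a feasible solution (0 if there is none, which never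
   happens under the standing assumptions, cf. exists_feasible). *)
Definition OPT (L0 : seq E) (s : seq req) : nat :=
  match excluded_middle_informative (exists c, opt_pred L0 s c) with
  | left h => ex_minn h
  | right _ => 0%N
  end.

Lemma OPT_spec (L0 : seq E) (s : seq req) :
  perm_eq L0 (enum E) -> all (fun r => rarr r <= rdl r) s ->
  (exists S, feasible L0 s S /\ sched_cost S = OPT L0 s) /\
  (forall S, feasible L0 s S -> (OPT L0 s <= sched_cost S)%N).
Proof.
move=> hp ha; rewrite /OPT.
case: excluded_middle_informative => [h|hn]; last first.
  exfalso; apply: hn; have [c [S [hS hc]]] := exists_feasible hp ha.
  exists c; rewrite /opt_pred; case: excluded_middle_informative => // hn'.
  by exfalso; apply: hn'; exists S.
case: ex_minnP => m hm hmin; split.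
  by move: hm; rewrite /opt_pred; case: excluded_middle_informative.
move=> S hS; apply: hmin; rewrite /opt_pred.
case: excluded_middle_informative => // hn'.
by exfalso; apply: hn'; exists S.
Qed.

End LUTW.

From Pilot Require Import Defs.
From HB Require Import structures.
From mathcomp Require Import all_boot all_order all_algebra.
Import Order.TTheory GRing.Theory Num.Theory.
Set Implicit Arguments. Unset Strict Implicit. Unset Printing Implicit Defensive.
Local Open Scope ring_scope.

(* The
   ratio inequality ALG(sigma)/OPT(sigma) <= ALG(sigma')/OPT(sigma') follows
   from three facts:
   1. ALG(sigma') = ALG(sigma).  We run ALG on both inputs in lockstep over the
      deadlines of sigma and show by induction that both runs keep the same
      list and cost, and that every request of sigma' has the same pending
      status as the corresponding kept request of sigma.  At each event the
      triggering element is realised by a kept (triggering) request, so both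
      runs compute the same maximal index and perform the same access and
      moves; deadlines of sigma that are not deadlines of sigma' are idle
      steps for the run on sigma'.
   2. OPT(sigma') <= OPT(sigma), since every schedule feasible for sigma is
      feasible for any subsequence of sigma.
   3. OPT(sigma') > 0 when sigma' is nonempty (serving a request costs at
      least one), while for empty sigma' both ratios vanish.
   The theorem then follows from monotonicity of a / b in the denominator. *)

Lemma uniq_fst_inj (T : eqType) (ps : seq (nat * T)) (p q : nat * T) :
  uniq (map fst ps) -> p \in ps -> q \in ps -> p.1 = q.1 -> p = q.
Proof.
elim: ps => //= a ps IH /andP[a_new uniq_ps]; rewrite !inE.
case/orP=> [/eqP->|p_ps]; case/orP=> [/eqP->|q_ps] //= e.
- by move: a_new; rewrite e (map_f fst q_ps).
- by move: a_new; rewrite -e (map_f fst p_ps).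
- exact: IH.
Qed.

Lemma mem_filter_fst (T : eqType) (ps : seq (nat * T)) (P : pred (nat * T))
    (p : nat * T) :
  uniq (map fst ps) -> p \in ps -> (p.1 \in [seq q.1 | q <- ps & P q]) = P p.
Proof.
move=> uniq_ps p_ps; apply/idP/idP; last by move=> Pp; rewrite map_f // mem_filter Pp.
case/mapP=> q; rewrite mem_filter => /andP[Pq q_ps] e.
by rewrite (uniq_fst_inj uniq_ps p_ps q_ps e).
Qed.

Lemma foldl_filter (A B : Type) (f : A -> B -> A) (P : pred B) (x : A) (xs : seq B) :
  (forall y b, ~~ P b -> f y b = y) -> foldl f x xs = foldl f x (filter P xs).
Proof.
move=> idle; elim: xs x => //= b xs IH x.
by case: ifP => [_|/negbT/idle ->]; apply: IH.
Qed.

Lemma all2_mem_has (tr : seq nat) (ev : seq (seq nat)) :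
  all2 (fun k C => k \in C) tr ev -> forall C, C \in ev -> has (mem tr) C.
Proof.
elim: tr ev => [|k tr IH] [|C0 ev] //= /andP[k_C0 hev] C.
rewrite inE => /orP[/eqP->|C_ev]; first by apply/hasP; exists k; rewrite //= inE eqxx.
by apply: sub_has (IH _ hev _ C_ev) => x /= x_tr; apply: mem_behead.
Qed.

Lemma ler_wpdiv_den (F : numFieldType) (a b c : F) :
  0 <= a -> 0 < b -> b <= c -> a / c <= a / b.
Proof.
move=> a_ge0 b_gt0 b_le_c; apply: ler_wpM2l => //.
by rewrite lef_pV2 ?posrE // (lt_le_trans b_gt0 b_le_c).
Qed.

Section AlgStep.
Variables (R : realDomainType) (E : finType).

Lemma uniq_indexed (u : seq (req E R)) : uniq (map fst (Defs.indexed u)).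
Proof. by rewrite /Defs.indexed -/(unzip1 _) unzip1_zip ?size_iota // iota_uniq. Qed.

Lemma snd_indexed (u : seq (req E R)) : map snd (Defs.indexed u) = u.
Proof. by rewrite /Defs.indexed -/(unzip2 _) unzip2_zip ?size_iota. Qed.

(* The status of an indexed request in a state of ALG: whether it is still
   unserved, together with the request itself.  One step of ALG only depends
   on, and only changes, these statuses (besides list and cost). *)
Definition status (st : alg_state E) (p : nat * req E R) : bool * req E R :=
  (p.1 \notin aserved st, p.2).

Definition due_at (t : R) (x : bool * req E R) : bool :=
  (x.1 && (rarr x.2 <= t)) && (rdl x.2 == t).

Definition after_access (L : seq E) (t : R) (m : nat) (x : bool * req E R)
    : bool * req E R :=
  (x.1 && ~~ ((x.1 && (rarr x.2 <= t)) && (index (relem x.2) L < m)%N), x.2).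

Lemma alg_step_status (u : seq (req E R)) (st : alg_state E) (t : R) :
  has (fun p => due_at t (status st p)) (Defs.indexed u) ->
  let L := alist st in
  let i0 := (\max_(x <- map (status st) (Defs.indexed u) | due_at t x)
               index (relem x.2) L)%N in
  let m := minn (2 * i0).+1 (size L) in
  [/\ alist (alg_step u st t) = drop i0 (take i0.+1 L) ++ take i0 L ++ drop i0.+1 L,
      acost (alg_step u st t) = (acost st + m + i0)%N &
      map (status (alg_step u st t)) (Defs.indexed u)
        = map (after_access L t m) (map (status st) (Defs.indexed u))].
Proof.
move=> has_due L i0 m; rewrite /alg_step has_due /=.
have -> : (\max_(p <- Defs.indexed u | due_at t (status st p))
             index (relem p.2) L)%N = i0 by rewrite /i0 big_map.
split=> //; rewrite -map_comp; apply/eq_in_map => p p_u /=.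
rewrite /status /after_access /= mem_cat negb_or.
by rewrite (mem_filter_fst _ (uniq_indexed u) p_u).
Qed.

Lemma alg_step_idle (u : seq (req E R)) (st : alg_state E) (t : R) :
  ~~ has (fun p => due_at t (status st p)) (Defs.indexed u) -> alg_step u st t = st.
Proof. by rewrite /alg_step => /negbTE ->. Qed.

Lemma aevents_foldl (u : seq (req E R)) (ts : seq R) (st : alg_state E) (C : seq nat) :
  C \in aevents st -> C \in aevents (foldl (alg_step u) st ts).
Proof.
elim: ts st => //= t ts IH st C_st; apply: IH.
by rewrite /alg_step; case: ifP => //= _; rewrite mem_rcons inE C_st orbT.
Qed.

End AlgStep.

Section Simulation.
Variables (R : realDomainType) (E : finType) (s : seq (req E R)) (trig : seq nat).

Definition kept : seq (nat * req E R) := [seq p <- Defs.indexed s | p.1 \in trig].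
Local Notation s' := (restrict s trig).

Lemma kept_indexed (p : nat * req E R) : p \in kept -> p \in Defs.indexed s.
Proof. by rewrite mem_filter => /andP[]. Qed.

Lemma restrict_sub : {subset s' <= s}.
Proof.
move=> r /mapP[p /kept_indexed p_s ->].
by rewrite -[X in _ \in X](snd_indexed s) map_f.
Qed.

Definition simulates (st st' : alg_state E) : Prop :=
  [/\ alist st = alist st', acost st = acost st' &
      map (status st') (Defs.indexed s') = map (status st) kept].

Section Step.
Variables (st st' : alg_state E) (t : R).
Hypothesis sim : simulates st st'.

Lemma has_due_restrict :
  has (fun p => due_at t (status st' p)) (Defs.indexed s')
  = has (fun p => due_at t (status st p)) kept.
Proof. by case: sim => _ _ e; rewrite -has_map e has_map. Qed.

Let L := alist st.
Let i0 := (\max_(x <- map (status st) (Defs.indexed s) | due_at t x)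
             index (relem x.2) L)%N.

Lemma kept_trigger :
  has (fun p => due_at t (status st p)) (Defs.indexed s) ->
  (forall C, C \in aevents (alg_step s st t) -> has (mem trig) C) ->
  exists2 p, p \in kept & due_at t (status st p) && (index (relem p.2) L == i0).
Proof.
move=> has_due hit.
have : [seq p.1 | p <- Defs.indexed s & due_at t (status st p)
                                      && (index (relem p.2) L == i0)]
       \in aevents (alg_step s st t).
  rewrite /alg_step has_due /= /i0 big_map.
  by rewrite mem_rcons mem_head.
case/hit/hasP=> k /mapP[p]; rewrite mem_filter => /andP[p_due p_s] -> p_trig.
by exists p; rewrite // mem_filter p_s andbT.
Qed.

Lemma trigger_index_restrict (p : nat * req E R) :
  p \in kept -> due_at t (status st p) -> index (relem p.2) L = i0 ->
  (\max_(x <- map (status st') (Defs.indexed s') | due_at t x)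
     index (relem x.2) (alist st'))%N = i0.
Proof.
case: sim => eL _ e p_kept p_due p_i0; rewrite e -eL; apply/eqP; rewrite eqn_leq.
have le_max (ps : seq (nat * req E R)) (q : nat * req E R) :
    q \in ps -> due_at t (status st q) ->
    (index (relem q.2) L <= \max_(x <- map (status st) ps | due_at t x)
                               index (relem x.2) L)%N.
  by move=> q_ps; apply: (@leq_bigmax_seq _ _ (due_at t)
                            (fun x => index (relem x.2) L) _ (map_f _ q_ps)).
apply/andP; split; last by rewrite -p_i0 le_max.
by apply/bigmax_leqP_seq => x /mapP[q /kept_indexed q_s ->]; apply: le_max.
Qed.

Lemma alg_step_simulates :
  (forall C, C \in aevents (alg_step s st t) -> has (mem trig) C) ->
  simulates (alg_step s st t) (alg_step s' st' t).
Proof.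
move=> hit; have [eL eC eS] := sim.
case: (boolP (has (fun p => due_at t (status st p)) (Defs.indexed s))) => has_due;
  last first.
  rewrite !alg_step_idle // has_due_restrict; apply: contra has_due.
  by case/hasP=> p /kept_indexed p_s p_due; apply/hasP; exists p.
have [p p_kept /andP[p_due /eqP p_i0]] := kept_trigger has_due hit.
have has_due' : has (fun p => due_at t (status st' p)) (Defs.indexed s').
  by rewrite has_due_restrict; apply/hasP; exists p.
have [eL1 eC1 eS1] := alg_step_status has_due.
have [eL2 eC2 eS2] := alg_step_status has_due'.
rewrite (trigger_index_restrict p_kept p_due p_i0) -eL in eL2 eC2 eS2.
split; [by rewrite eL1 eL2 | by rewrite eC1 eC2 eC |].
rewrite eS2 eS -!map_comp; apply/eq_in_map => q /kept_indexed q_s /=.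
by move: eS1; rewrite -map_comp => /eq_in_map/(_ q q_s) ->.
Qed.

End Step.

Lemma alg_cost_simulation (ts : seq R) (st st' : alg_state E) :
  simulates st st' ->
  (forall C, C \in aevents (foldl (alg_step s) st ts) -> has (mem trig) C) ->
  acost (foldl (alg_step s) st ts) = acost (foldl (alg_step s') st' ts).
Proof.
elim: ts st st' => [|t ts IH] st st' /= sim hit; first by case: sim.
apply: IH (hit) => //; apply: alg_step_simulates => // C C_ev.
by apply: hit; apply: aevents_foldl.
Qed.

(* Running ALG on s' over the deadlines of s is the same as over its own
   deadlines: the extra times are idle. *)
Lemma alg_run_deadlines_restrict (st : alg_state E) :
  foldl (alg_step s') st (deadlines s) = foldl (alg_step s') st (deadlines s').
Proof.
rewrite (@foldl_filter _ _ _ (mem (map (@rdl _ _) s'))); last first.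
  move=> y t t_new; apply: alg_step_idle; apply/hasP=> -[p p_s'].
  case/andP=> _ /eqP /= dl_t; move/negP: t_new; apply; rewrite -dl_t.
  by apply: map_f; rewrite -(snd_indexed s') map_f.
have deadlines_sorted u : sorted <%R (deadlines u).
  by rewrite /deadlines sort_lt_sorted undup_uniq.
congr foldl; apply: lt_sorted_eq; rewrite ?lt_sorted_filter //.
move=> t; rewrite mem_filter /deadlines !mem_sort !mem_undup /=.
case: (boolP (t \in map (@rdl _ _) s')) => //= /mapP[r /restrict_sub r_s ->].
exact: map_f.
Qed.

End Simulation.

Lemma ALG_restrict (R : realDomainType) (E : finType) (L0 : seq E)
    (s : seq (req E R)) (trig : seq nat) :
  triggering_choice L0 s trig -> ALG L0 (restrict s trig) = ALG L0 s.
Proof.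
move=> htrig; rewrite /ALG /alg_run -alg_run_deadlines_restrict.
symmetry; apply: alg_cost_simulation; last exact: all2_mem_has htrig.
have init_status (ps : seq (nat * req E R)) :
    map (status (AlgState L0 [::] 0%N [::])) ps = [seq (true, r) | r <- map snd ps].
  by rewrite -map_comp; apply/eq_map => p; rewrite /status in_nil.
by split=> //; rewrite !init_status snd_indexed.
Qed.

Lemma feasible_sub (R : realDomainType) (E : finType) (L0 : seq E)
    (s u : seq (req E R)) (S : schedule R) :
  {subset u <= s} -> feasible L0 s S -> feasible L0 u S.
Proof.
move=> u_s /and3P[sorted_S valid_S /allP served]; apply/and3P; split=> //.
by apply/allP => r /u_s /served.
Qed.

(* Serving at least one request needs an access of positive cost. *)
Lemma feasible_cost_pos (R : realDomainType) (E : finType) (L0 : seq E)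
    (s : seq (req E R)) (S : schedule R) :
  s != [::] -> feasible L0 s S -> (0 < sched_cost S)%N.
Proof.
case: s => // r s _ /and3P[_ _ /= /andP[+ _]]; rewrite /served_in_time.
set p := find _ _ => /andP[p_S _].
have : covers L0 S r (nth 0%N (iota 0 (size S)) p).
  by apply: nth_find; rewrite has_find size_iota.
rewrite nth_iota // add0n /covers.
case S_p: (nth _ S p) => [t [i|j]] // /andP[_ r_lt_i].
rewrite lt0n /sched_cost sum_nat_seq_neq0; apply/(has_nthP (0, Acc 0%N)).
by exists p; rewrite // S_p /= -lt0n (leq_ltn_trans _ r_lt_i).
Qed.

Lemma OPT_sub (R : realDomainType) (E : finType) (L0 : seq E) (s u : seq (req E R)) :
  perm_eq L0 (enum E) -> all (fun r => rarr r <= rdl r) s -> {subset u <= s} ->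
  (OPT L0 u <= OPT L0 s)%N /\ (u != [::] -> 0 < OPT L0 u)%N.
Proof.
move=> L0_perm s_arr u_s.
have u_arr : all (fun r => rarr r <= rdl r) u by apply/allP => r /u_s /(allP s_arr).
have [[S [S_feas <-]] _] := OPT_spec L0_perm s_arr.
have [[S' [S'_feas <-]] S'_min] := OPT_spec L0_perm u_arr.
split; first exact/S'_min/(feasible_sub u_s).
by move=> u_nil; apply: feasible_cost_pos S'_feas.
Qed.

Theorem mainTheorem3 (R : realDomainType) (E : finType) (L0 : seq E)
    (s : seq (req E R)) (trig : seq nat) :
  perm_eq L0 (enum E) ->
  s != [::] ->
  all (fun r => rarr r <= rdl r) s ->
  triggering_choice L0 s trig ->
  (ALG L0 s)%:R / (OPT L0 s)%:R
    <= (ALG L0 (restrict s trig))%:R / (OPT L0 (restrict s trig))%:R :> rat.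
Proof.
move=> L0_perm _ s_arr htrig; rewrite -(ALG_restrict htrig).
have [OPT_le OPT_pos] := OPT_sub L0_perm s_arr (@restrict_sub _ _ s trig).
have [-> | s'_nil] := eqVneq (restrict s trig) [::]; first by rewrite !mul0r.
by apply: ler_wpdiv_den; rewrite ?ler_nat ?ltr0n ?OPT_pos.
Qed.
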